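(* Let $n\in(0,1)$, let $I=(0,\infty)$ and $\lambda(z)=z^{-n}$, and fix a sign $\pm$. Then there exists $c>0$ with $8c^2(1\pm c^{-n})=n(1-n)$, and for every such $c$ and every $b\in\mathbb{R}$ the Legendre curve $\gamma_{\{b,c\}}(s)=(b,s,c)$ in $\tilde M(1-\lambda^2,2(1\pm\lambda))$ is proper biharmonic.
   Context: Definition of $\tilde M(1-\lambda^2,2(1\pm\lambda))$: Let $\lambda:I\to\mathbb{R}$ be a non-constant positive smooth function on an open interval $I$, $\lambda'=d\lambda/dz$. On $\tilde M^3=\mathbb{R}^2\times I\subset\mathbb{R}^3$ with coordinates $(x,y,z)$ consider the vector fields $e_1=\partial_x$, $e_2=\partial_y$, $e_3=(\pm 2y+f(z))\partial_x+\big(2\lambda x-\frac{\lambda'}{2\lambda}y+h(z)\big)\partial_y+\partial_z$, where $f,h$ are arbitrary smooth functions of $z$. Let $g$ be the Riemannian metric with $g(e_i,e_j)=\delta_{ij}$, $\xi=e_1$, $\eta$ the $1$-form dual to $e_1$, and $\phi$ the $(1,1)$-tensor with $\phi e_1=0$, $\phi e_2=\pm e_3$, $\phi e_3=\mp e_2$ (all double signs correspond to the sign in $\pm 2y$). This is a contact metric manifold which is a generalized $(\kappa,\mu)$-manifold with $\kappa=1-\lambda^2$, $\mu=2(1\pm\lambda)$. A curve parametrized by arclength is Legendre if $\eta(\gamma')=0$. A curve (isometric immersion) is biharmonic if its bitension field $\tau_2=-\Delta\tau+\mathrm{trace}\,\tilde R(\tau,d\gamma)d\gamma$ vanishes, equivalently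 $\tilde\nabla_T\tilde\nabla_T\tilde\nabla_T T+\tilde R(\tilde\nabla_T T,T)T=0$ for the unit tangent $T$, with $\tilde R(X,Y)=[\tilde\nabla_X,\tilde\nabla_Y]-\tilde\nabla_{[X,Y]}$; it is proper biharmonic if it is biharmonic and not a geodesic. *)

From Stdlib Require Import Reals Lra ClassicalEpsilon.
Open Scope R_scope.

Definition deriv (f : R -> R) (x : R) : R :=
  epsilon (inhabits 0) (fun l => derivable_pt_lim f x l).

Definition smooth_on (U : R -> Prop) (f : R -> R) : Prop :=
  exists F : nat -> R -> R,
    F 0%nat = f /\
    forall (k : nat) (x : R), U x -> derivable_pt_lim (F k) x (F (S k) x).

(** Points of R^3 are coordinate functions p : nat -> R with
    p 0 = x, p 1 = y, p 2 = z; vectors likewise (components 0,1,2). *)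
Definition sum3 (F : nat -> R) : R := F 0%nat + F 1%nat + F 2%nat.
Definition delta (i j : nat) : R := if Nat.eqb i j then 1 else 0.

Definition upd (p : nat -> R) (a : nat) (t : R) : nat -> R :=
  fun k => if Nat.eqb k a then t else p k.

Definition pd (F : (nat -> R) -> R) (a : nat) (p : nat -> R) : R :=
  deriv (fun t => F (upd p a t)) (p a).

(** The manifold  M~ = R^2 x I,  I = (0, +oo). *)
Definition inM (p : nat -> R) : Prop := 0 < p 2%nat.

Definition lam (n z : R) : R := Rpower z (- n).
Definition dlam (n z : R) : R := deriv (lam n) z.

(** Orthonormal frame: frame n eps f h p a i = a-th coordinate component of
    e_(i+1) at p (i = 0,1,2).  eps = +1 / -1 encodes the double sign. *)
Definition frame (n eps : R) (f h : R -> R) (p : nat -> R) (a i : nat) : R :=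
  let x := p 0%nat in let y := p 1%nat in let z := p 2%nat in
  match i, a with
  | 0%nat, 0%nat => 1
  | 1%nat, 1%nat => 1
  | 2%nat, 0%nat => eps * 2 * y + f z
  | 2%nat, 1%nat => 2 * lam n z * x - dlam n z / (2 * lam n z) * y + h z
  | 2%nat, 2%nat => 1
  | _, _ => 0
  end.

Definition metric := (nat -> R) -> nat -> nat -> R.

Definition Gam (g ginv : metric) (p : nat -> R) (k i j : nat) : R :=
  / 2 * sum3 (fun l => ginv p k l *
     (pd (fun q => g q j l) i p + pd (fun q => g q i l) j p
      - pd (fun q => g q i j) l p)).

(** Curvature components: R(d_i,d_j)d_k = sum_l Riem l i j k d_l, where
    R(X,Y) = [nabla_X, nabla_Y] - nabla_[X,Y]. *)
Definition Riem (g ginv : metric) (p : nat -> R) (l i j k : nat) : R :=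
  pd (fun q => Gam g ginv q l j k) i p - pd (fun q => Gam g ginv q l i k) j p
  + sum3 (fun m => Gam g ginv p l i m * Gam g ginv p m j k
                   - Gam g ginv p l j m * Gam g ginv p m i k).

Definition vel (gam : R -> nat -> R) (s : R) (a : nat) : R :=
  deriv (fun t => gam t a) s.

Definition covD (g ginv : metric) (gam : R -> nat -> R) (V : R -> nat -> R)
  (s : R) (k : nat) : R :=
  deriv (fun t => V t k) s
  + sum3 (fun i => sum3 (fun j => Gam g ginv (gam s) k i j * vel gam s i * V s j)).

Definition tension (g ginv : metric) (gam : R -> nat -> R) : R -> nat -> R :=
  covD g ginv gam (vel gam).

Definition bitension (g ginv : metric) (gam : R -> nat -> R) (s : R) (l : nat) : R :=
  covD g ginv gam (covD g ginv gam (tension g ginv gam)) s l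
  + sum3 (fun i => sum3 (fun j => sum3 (fun k =>
      Riem g ginv (gam s) l i j k * tension g ginv gam s i
        * vel gam s j * vel gam s k))).

Definition biharmonic (g ginv : metric) (gam : R -> nat -> R) : Prop :=
  forall s l, (l < 3)%nat -> bitension g ginv gam s l = 0.

Definition geodesic (g ginv : metric) (gam : R -> nat -> R) : Prop :=
  forall s l, (l < 3)%nat -> tension g ginv gam s l = 0.

Definition proper_biharmonic (g ginv : metric) (gam : R -> nat -> R) : Prop :=
  biharmonic g ginv gam /\ ~ geodesic g ginv gam.

Definition gdot (g : metric) (p : nat -> R) (X Y : nat -> R) : R :=
  sum3 (fun a => sum3 (fun b => g p a b * X a * Y b)).

Definition unit_speed (g : metric) (gam : R -> nat -> R) : Prop :=
  forall s, gdot g (gam s) (vel gam s) (vel gam s) = 1.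

(** Legendre: eta(gamma') = 0, eta = g(., xi), xi = e_1 *)
Definition legendre (n eps : R) (f h : R -> R) (g : metric) (gam : R -> nat -> R) : Prop :=
  unit_speed g gam /\
  forall s, gdot g (gam s) (vel gam s) (fun a => frame n eps f h (gam s) a 0%nat) = 0.

Definition is_frame_metric (n eps : R) (f h : R -> R) (g ginv : metric) : Prop :=
  (forall p, inM p -> forall i j, (i < 3)%nat -> (j < 3)%nat ->
     gdot g p (fun a => frame n eps f h p a i) (fun b => frame n eps f h p b j)
     = delta i j) /\
  (forall p, inM p -> forall a c, (a < 3)%nat -> (c < 3)%nat ->
     sum3 (fun b => g p a b * ginv p b c) = delta a c).

Definition gamma_bc (b c : R) (s : R) : nat -> R :=
  fun a => match a with 0%nat => b | 1%nat => s | _ => c end.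

From Stdlib Require Import Reals Lra Lia ClassicalEpsilon FunctionalExtensionality.
From Coquelicot Require Import Coquelicot.
Open Scope R_scope.

(* Since e_2 = d/dy, the curve gamma_{b,c} is an integral curve of e_2 and its tension
   field is nabla_{e_2} e_2 = mu e_3 with mu = lambda'/(2 lambda) = -n/(2c) <> 0, so it is
   never a geodesic.  Differentiating twice more along e_2 and adding the curvature term,
   the bitension is again a multiple of e_3, namely
     n/(4c^3) * (8c^2 (1 +- lambda(c)) - n(1-n)) e_3,
   which vanishes exactly for the values of c in the statement; such a c exists by the
   intermediate value theorem. *)

Arguments lam : simpl never.

Lemma deriv_unique (F : R -> R) x l : derivable_pt_lim F x l -> deriv F x = l.
Proof.
  intros H. unfold deriv.
  apply (uniqueness_limite F x); [apply epsilon_spec; eauto | exact H].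
Qed.

Lemma derivable_pt_lim_local (F E : R -> R) x l r :
  0 < r -> (forall t, Rabs (t - x) < r -> F t = E t) ->
  derivable_pt_lim E x l -> derivable_pt_lim F x l.
Proof.
  intros Hr Heq H e He.
  destruct (H e He) as [d Hd].
  assert (Hm : 0 < Rmin d r) by (apply Rmin_pos; [apply cond_pos | lra]).
  exists (mkposreal _ Hm). intros t Ht0 Ht. simpl in Ht.
  rewrite (Heq (x + t)), (Heq x).
  - apply Hd; auto. eapply Rlt_le_trans; [exact Ht | apply Rmin_l].
  - rewrite Rminus_diag, Rabs_R0; lra.
  - replace (x + t - x) with t by ring.
    eapply Rlt_le_trans; [exact Ht | apply Rmin_r].
Qed.

Lemma pd_local (F : (nat -> R) -> R) (E : R -> R) a p l r :
  0 < r -> (forall t, Rabs (t - p a) < r -> F (upd p a t) = E t) ->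
  is_derive E (p a) l -> pd F a p = l.
Proof.
  intros Hr Heq H. apply deriv_unique.
  apply (derivable_pt_lim_local _ E _ _ r Hr Heq), is_derive_Reals, H.
Qed.

Lemma smooth_on_ex_derive (U : R -> Prop) (f : R -> R) :
  smooth_on U f -> forall x, U x -> ex_derive f x.
Proof.
  intros [F [HF0 HF]] x Hx. exists (F 1%nat x).
  apply is_derive_Reals. rewrite <- HF0. now apply HF.
Qed.

Lemma lt3_cases (a : nat) : (a < 3)%nat -> a = 0%nat \/ a = 1%nat \/ a = 2%nat.
Proof. lia. Qed.

Lemma lam_pos n z : 0 < lam n z.
Proof. apply exp_pos. Qed.

Lemma lam_1 n : lam n 1 = 1.
Proof. unfold lam, Rpower. now rewrite ln_1, Rmult_0_r, exp_0. Qed.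

Lemma derivable_pt_lim_lam n z :
  0 < z -> derivable_pt_lim (lam n) z (- n * Rpower z (- n - 1)).
Proof. apply derivable_pt_lim_power. Qed.

Lemma ex_derive_lam n z : 0 < z -> ex_derive (lam n) z.
Proof.
  intros Hz. eexists. apply is_derive_Reals, derivable_pt_lim_lam, Hz.
Qed.

Lemma dlam_div_lam n z : 0 < z -> dlam n z / (2 * lam n z) = - n / (2 * z).
Proof.
  intros Hz. unfold dlam. rewrite (deriv_unique _ _ _ (derivable_pt_lim_lam n z Hz)).
  replace (- n - 1) with (- n + - (1)) by ring.
  rewrite Rpower_plus, (Rpower_Ropp z 1), Rpower_1 by lra.
  pose proof (lam_pos n z). unfold lam in *. field. lra.
Qed.

Definition biharm_defect (n eps c : R) : R :=
  8 * c ^ 2 * (1 + eps * lam n c) - n * (1 - n).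

Lemma continuous_biharm_defect n eps x : 0 < x -> continuity_pt (biharm_defect n eps) x.
Proof.
  intros Hx. apply derivable_continuous_pt. eexists. apply is_derive_Reals.
  unfold biharm_defect. auto_derive; [| reflexivity].
  now apply ex_derive_lam.
Qed.

Lemma lam_lt_inv n x : 0 < n < 1 -> 0 < x < 1 -> lam n x < / x.
Proof.
  intros Hn Hx. unfold lam, Rpower.
  rewrite <- (exp_ln x) at 2 by lra. rewrite <- exp_Ropp.
  apply exp_increasing.
  assert (ln x < 0) by (rewrite <- ln_1; apply ln_increasing; lra). nra.
Qed.

Lemma lam_half n : 0 < n -> lam n (exp (ln 2 / n)) = / 2.
Proof.
  intros Hn. unfold lam, Rpower. rewrite ln_exp.
  replace (- n * (ln 2 / n)) with (- ln 2) by (field; lra).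
  rewrite exp_Ropp, exp_ln; lra.
Qed.

(* For eps = 1 the defect changes sign on [n(1-n)/32, 1]; for eps = -1 on [1, 2^(1/n)]. *)
Lemma exists_biharm_defect_root n eps : 0 < n < 1 -> (eps = 1 \/ eps = -1) ->
  exists c, 0 < c /\ biharm_defect n eps c = 0.
Proof.
  intros Hn Heps.
  assert (Hnn : 0 < n * (1 - n) <= 1 / 4)
    by (split; [apply Rmult_lt_0_compat | pose proof (pow2_ge_0 (n - 1 / 2)); nra]; lra).
  assert (IVT : forall x y, 0 < x < y ->
            biharm_defect n eps x < 0 < biharm_defect n eps y ->
            exists c, 0 < c /\ biharm_defect n eps c = 0).
  { intros x y Hxy Hsign.
    destruct (Ranalysis5.IVT_interv (biharm_defect n eps) x y) as [z [Hz Hz0]];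
      try lra; [intros a Ha; apply continuous_biharm_defect; lra |].
    exists z. split; [lra | exact Hz0]. }
  unfold biharm_defect in IVT.
  destruct Heps as [-> | ->].
  - set (x0 := n * (1 - n) / 32).
    assert (Hx0 : 0 < x0 < 1) by (unfold x0; lra).
    apply (IVT x0 1); [lra |]. rewrite lam_1. split; [| lra].
    assert (x0 * lam n x0 < 1).
    { pose proof (lam_lt_inv n x0 Hn Hx0) as Hlt.
      apply (Rmult_lt_compat_l x0) in Hlt; [| lra].
      now rewrite Rinv_r in Hlt by lra. }
    pose proof (lam_pos n x0).
    assert (x0 ^ 2 * lam n x0 < x0) by nra.
    assert (x0 ^ 2 < x0) by nra.
    unfold x0 in *. nra.
  - set (Y := exp (ln 2 / n)).
    assert (HY : 1 < Y).
    { unfold Y. rewrite <- exp_0. apply exp_increasing, Rdiv_lt_0_compat; [| lra].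
      rewrite <- ln_1. apply ln_increasing; lra. }
    apply (IVT 1 Y); [lra |]. unfold Y. rewrite lam_1, lam_half by lra. fold Y. nra.
Qed.

Section FrameMetric.
Variables (n eps : R) (f h : R -> R) (g ginv : metric).
Hypothesis Hf : forall x, 0 < x -> ex_derive f x.
Hypothesis Hh : forall x, 0 < x -> ex_derive h x.
Hypothesis Hg : is_frame_metric n eps f h g ginv.

(* e_3 = frameA d/dx + frameB d/dy + d/dz, with lambda'/(2 lambda) = -n/(2z) already substituted. *)
Definition frameA (p : nat -> R) : R := eps * 2 * p 1%nat + f (p 2%nat).
Definition frameB (p : nat -> R) : R :=
  2 * lam n (p 2%nat) * p 0%nat + n / (2 * p 2%nat) * p 1%nat + h (p 2%nat).

Definition gcoef (p : nat -> R) (a b : nat) : R :=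
  match a, b with
  | 0, 0 | 1, 1 => 1
  | 0, 2 | 2, 0 => - frameA p
  | 1, 2 | 2, 1 => - frameB p
  | 2, 2 => 1 + frameA p ^ 2 + frameB p ^ 2
  | _, _ => 0
  end.

Definition ginvcoef (p : nat -> R) (a b : nat) : R :=
  match a, b with
  | 0, 0 => 1 + frameA p ^ 2
  | 0, 1 | 1, 0 => frameA p * frameB p
  | 0, 2 | 2, 0 => frameA p
  | 1, 1 => 1 + frameB p ^ 2
  | 1, 2 | 2, 1 => frameB p
  | 2, 2 => 1
  | _, _ => 0
  end.

Definition dframeA (p : nat -> R) (r : nat) : R :=
  match r with 0 => 0 | 1 => eps * 2 | _ => Derive f (p 2%nat) end.
Definition dframeB (p : nat -> R) (r : nat) : R :=
  match r with
  | 0 => 2 * lam n (p 2%nat)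
  | 1 => n / (2 * p 2%nat)
  | _ => 2 * Derive (lam n) (p 2%nat) * p 0%nat - n / (2 * p 2%nat ^ 2) * p 1%nat
         + Derive h (p 2%nat)
  end.

Definition dgcoef (p : nat -> R) (a b r : nat) : R :=
  match a, b with
  | 0, 2 | 2, 0 => - dframeA p r
  | 1, 2 | 2, 1 => - dframeB p r
  | 2, 2 => 2 * frameA p * dframeA p r + 2 * frameB p * dframeB p r
  | _, _ => 0
  end.

Definition Gamcoef (p : nat -> R) (k i j : nat) : R :=
  / 2 * sum3 (fun l => ginvcoef p k l * (dgcoef p j l i + dgcoef p i l j - dgcoef p i j l)).

Lemma frame_e3 p k : inM p -> frame n eps f h p k 2 = ginvcoef p k 2.
Proof.
  intros Hp. unfold inM in Hp.
  destruct k as [| [| [| k]]]; try reflexivity.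
  unfold frame; simpl; unfold frameB. rewrite dlam_div_lam by exact Hp. field. lra.
Qed.

Lemma frame_metric_g p : inM p -> forall a b, (a < 3)%nat -> (b < 3)%nat ->
  g p a b = gcoef p a b.
Proof.
  intros Hp. destruct Hg as [Horth _].
  assert (E : forall i j, (i < 3)%nat -> (j < 3)%nat ->
     gdot g p (fun a => frame n eps f h p a i) (fun b => frame n eps f h p b j) = delta i j)
    by (intros; apply Horth; auto).
  pose proof (E 0%nat 0%nat ltac:(lia) ltac:(lia)) as E00.
  pose proof (E 0%nat 1%nat ltac:(lia) ltac:(lia)) as E01.
  pose proof (E 0%nat 2%nat ltac:(lia) ltac:(lia)) as E02.
  pose proof (E 1%nat 0%nat ltac:(lia) ltac:(lia)) as E10.
  pose proof (E 1%nat 1%nat ltac:(lia) ltac:(lia)) as E11.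
  pose proof (E 1%nat 2%nat ltac:(lia) ltac:(lia)) as E12.
  pose proof (E 2%nat 0%nat ltac:(lia) ltac:(lia)) as E20.
  pose proof (E 2%nat 1%nat ltac:(lia) ltac:(lia)) as E21.
  pose proof (E 2%nat 2%nat ltac:(lia) ltac:(lia)) as E22.
  clear E Horth.
  unfold gdot, sum3, delta in *. rewrite !frame_e3 in * by exact Hp. simpl in *.
  assert (g00 : g p 0%nat 0%nat = 1) by lra.
  assert (g01 : g p 0%nat 1%nat = 0) by lra.
  assert (g10 : g p 1%nat 0%nat = 0) by lra.
  assert (g11 : g p 1%nat 1%nat = 1) by lra.
  assert (g02 : g p 0%nat 2%nat = - frameA p) by (rewrite g00, g01 in E02; lra).
  assert (g20 : g p 2%nat 0%nat = - frameA p) by (rewrite g00, g10 in E20; lra).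
  assert (g12 : g p 1%nat 2%nat = - frameB p) by (rewrite g10, g11 in E12; lra).
  assert (g21 : g p 2%nat 1%nat = - frameB p) by (rewrite g01, g11 in E21; lra).
  assert (g22 : g p 2%nat 2%nat = 1 + frameA p ^ 2 + frameB p ^ 2).
  { rewrite g00, g01, g10, g11, g02, g20, g12, g21 in E22. nra. }
  intros a b Ha Hb.
  destruct (lt3_cases a Ha) as [-> | [-> | ->]];
    destruct (lt3_cases b Hb) as [-> | [-> | ->]]; assumption.
Qed.

Lemma frame_metric_ginv p : inM p -> forall a b, (a < 3)%nat -> (b < 3)%nat ->
  ginv p a b = ginvcoef p a b.
Proof.
  intros Hp a c Ha Hc. destruct Hg as [_ Hinv].
  pose proof (Hinv p Hp 0%nat c ltac:(lia) Hc) as E0.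
  pose proof (Hinv p Hp 1%nat c ltac:(lia) Hc) as E1.
  pose proof (Hinv p Hp 2%nat c ltac:(lia) Hc) as E2.
  unfold sum3 in *. rewrite !(frame_metric_g p Hp) in E0, E1, E2 by lia. simpl in E0, E1, E2.
  set (A := frameA p) in *. set (B := frameB p) in *.
  (* apply the explicit inverse of gcoef to the c-th columns E0, E1, E2 of gcoef * ginv *)
  assert (X0 : ginv p 0%nat c = (1 + A^2) * delta 0%nat c + A * B * delta 1%nat c + A * delta 2%nat c)
    by (rewrite <- E0, <- E1, <- E2; ring).
  assert (X1 : ginv p 1%nat c = A * B * delta 0%nat c + (1 + B^2) * delta 1%nat c + B * delta 2%nat c)
    by (rewrite <- E0, <- E1, <- E2; ring).
  assert (X2 : ginv p 2%nat c = A * delta 0%nat c + B * delta 1%nat c + delta 2%nat c)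
    by (rewrite <- E0, <- E1, <- E2; ring).
  destruct (lt3_cases a Ha) as [-> | [-> | ->]];
    [rewrite X0 | rewrite X1 | rewrite X2];
    destruct (lt3_cases c Hc) as [-> | [-> | ->]]; unfold delta; simpl; fold A B; ring.
Qed.

Ltac eta_fh :=
  try change (fun x => f x) with f; try change (fun x => h x) with h;
  try change (fun x => lam n x) with (lam n).

Ltac solve_ex_derive :=
  repeat split; eta_fh; try first [apply Hf | apply Hh | apply ex_derive_lam]; simpl; lra.

Lemma pd_frame_metric p : inM p -> forall a b r, (a < 3)%nat -> (b < 3)%nat -> (r < 3)%nat ->
  pd (fun q => g q a b) r p = dgcoef p a b r.
Proof.
  intros Hp a b r Ha Hb Hr.
  apply (pd_local _ (fun t => gcoef (upd p r t) a b) _ _ _ (p 2%nat)); [exact Hp | |].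
  - intros t Ht. apply frame_metric_g; auto. unfold inM, upd in *.
    destruct (lt3_cases r Hr) as [-> | [-> | ->]]; simpl; try lra.
    apply Rabs_def2 in Ht. lra.
  - unfold inM in Hp.
    destruct (lt3_cases a Ha) as [-> | [-> | ->]];
      destruct (lt3_cases b Hb) as [-> | [-> | ->]];
      destruct (lt3_cases r Hr) as [-> | [-> | ->]];
      unfold gcoef, dgcoef, dframeA, dframeB, frameA, frameB, upd; simpl;
      auto_derive; try solve_ex_derive; eta_fh; field; lra.
Qed.

Lemma Gam_frame_metric p : inM p -> forall k i j, (k < 3)%nat -> (i < 3)%nat -> (j < 3)%nat ->
  Gam g ginv p k i j = Gamcoef p k i j.
Proof.
  intros Hp k i j Hk Hi Hj. unfold Gam, Gamcoef, sum3.
  now rewrite !(frame_metric_ginv p Hp k), !(pd_frame_metric p Hp) by lia.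
Qed.

Section Curve.
Variables (b c : R).
Hypothesis Hc : 0 < c.

Lemma inM_gamma_bc t : inM (gamma_bc b c t).
Proof. exact Hc. Qed.

Lemma vel_gamma_bc : vel (gamma_bc b c) = fun _ a => match a with 1%nat => 1 | _ => 0 end.
Proof.
  extensionality s; extensionality a. unfold vel.
  destruct a as [| [| a]]; simpl; apply deriv_unique.
  - apply derivable_pt_lim_const.
  - apply derivable_pt_lim_id.
  - apply derivable_pt_lim_const.
Qed.

Lemma tension_gamma_bc t k : (k < 3)%nat ->
  tension g ginv (gamma_bc b c) t k = - n / (2 * c) * frame n eps f h (gamma_bc b c t) k 2.
Proof.
  intros Hk. rewrite frame_e3 by apply inM_gamma_bc.
  unfold tension, covD. rewrite vel_gamma_bc.
  rewrite (deriv_unique _ _ 0) by apply derivable_pt_lim_const.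
  unfold sum3. rewrite (Gam_frame_metric _ (inM_gamma_bc t) k 1%nat 1%nat) by lia.
  unfold Gamcoef, sum3, dgcoef, dframeB.
  destruct (lt3_cases k Hk) as [-> | [-> | ->]]; simpl; field; lra.
Qed.

Lemma gamma_bc_not_geodesic : 0 < n -> ~ geodesic g ginv (gamma_bc b c).
Proof.
  intros Hn Hgeo. specialize (Hgeo 0 2%nat ltac:(lia)).
  rewrite tension_gamma_bc in Hgeo by lia. simpl in Hgeo.
  assert (0 < n / (2 * c)) by (apply Rdiv_lt_0_compat; lra).
  unfold Rdiv in *. lra.
Qed.

Lemma legendre_gamma_bc : legendre n eps f h g (gamma_bc b c).
Proof.
  split; intros s; unfold gdot, sum3; rewrite vel_gamma_bc; unfold frame; simpl;
    rewrite !(frame_metric_g _ (inM_gamma_bc s)) by lia; simpl; ring.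
Qed.

Definition dtension_coef (k : nat) : R :=
  match k with
  | 0 => - n / (2 * c) * (eps * 2)
  | 1 => - n / (2 * c) * (n / (2 * c))
  | _ => 0
  end.

Definition covD_tension_coef (k : nat) (t : R) : R :=
  dtension_coef k
  + sum3 (fun j => Gamcoef (gamma_bc b c t) k 1%nat j * (- n / (2 * c) * ginvcoef (gamma_bc b c t) j 2)).

Lemma covD_tension_gamma_bc t k : (k < 3)%nat ->
  covD g ginv (gamma_bc b c) (tension g ginv (gamma_bc b c)) t k = covD_tension_coef k t.
Proof.
  intros Hk. unfold covD at 1.
  replace (fun t0 => tension g ginv (gamma_bc b c) t0 k)
    with (fun t0 => - n / (2 * c) * ginvcoef (gamma_bc b c t0) k 2)
    by (extensionality t0; symmetry;
        now rewrite tension_gamma_bc, frame_e3 by (apply inM_gamma_bc || exact Hk)).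
  rewrite (deriv_unique _ _ (dtension_coef k)).
  2:{ apply is_derive_Reals. unfold ginvcoef, frameA, frameB.
      destruct (lt3_cases k Hk) as [-> | [-> | ->]]; simpl;
        auto_derive; try easy; field; lra. }
  rewrite vel_gamma_bc. unfold sum3, covD_tension_coef.
  rewrite !tension_gamma_bc, !frame_e3, !(Gam_frame_metric _ (inM_gamma_bc t) k 1%nat)
    by (apply inM_gamma_bc || lia).
  unfold sum3; simpl. ring.
Qed.

Ltac solve_is_derive :=
  cbv beta iota zeta delta
    [covD_tension_coef dtension_coef Gamcoef ginvcoef dgcoef dframeA dframeB frameA frameB
     sum3 upd gamma_bc Nat.eqb];
  auto_derive; first [reflexivity | solve_ex_derive].

Ltac rewrite_pd_Gam k i j r p :=
  erewrite (pd_local (fun q => Gam g ginv q k i j) (fun t => Gamcoef (upd p r t) k i j)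
              r p _ c Hc);
  [| intros t Ht; apply Gam_frame_metric;
     [unfold inM, upd; simpl; simpl in Ht; apply Rabs_def2 in Ht; lra | lia ..]
   | solve_is_derive].

Hypothesis Heps : eps = 1 \/ eps = -1.

Lemma bitension_gamma_bc s l : (l < 3)%nat ->
  bitension g ginv (gamma_bc b c) s l
  = n / (4 * c ^ 3) * biharm_defect n eps c * frame n eps f h (gamma_bc b c s) l 2.
Proof.
  intros Hl. unfold bitension, covD at 1.
  replace (fun t => covD g ginv (gamma_bc b c) (tension g ginv (gamma_bc b c)) t l)
    with (covD_tension_coef l)
    by (extensionality t; symmetry; now apply covD_tension_gamma_bc).
  rewrite vel_gamma_bc. unfold sum3.
  rewrite !covD_tension_gamma_bc, !tension_gamma_bc, !frame_e3 by (apply inM_gamma_bc || lia).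
  (* drop the terms killed by the vanishing components of the velocity while they are small *)
  cbv beta iota. rewrite ?Rmult_0_l, ?Rmult_0_r, ?Rmult_1_r, ?Rplus_0_l, ?Rplus_0_r.
  destruct (lt3_cases l Hl) as [-> | [-> | ->]]; unfold Riem, sum3.
  all: rewrite !(Gam_frame_metric _ (inM_gamma_bc s)) by lia.
  all: erewrite deriv_unique; [| apply is_derive_Reals; solve_is_derive].
  all: repeat match goal with |- context [pd (fun q => Gam g ginv q ?k 1%nat 1%nat) ?r ?p] =>
         rewrite_pd_Gam k 1%nat 1%nat r p end.
  all: repeat match goal with |- context [pd (fun q => Gam g ginv q ?k ?i 1%nat) 1%nat ?p] =>
         rewrite_pd_Gam k i 1%nat 1%nat p end.
  all: cbv beta iota zeta delta
         [biharm_defect covD_tension_coef dtension_coef Gamcoef ginvcoef dgcoef dframeA dframeB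
          frameA frameB sum3 upd gamma_bc Nat.eqb].
  all: eta_fh; destruct Heps as [-> | ->]; field; lra.
Qed.

End Curve.

End FrameMetric.

Theorem mainTheorem2 (n eps : R) :
  0 < n < 1 -> (eps = 1 \/ eps = -1) ->
  (exists c, 0 < c /\ 8 * c ^ 2 * (1 + eps * Rpower c (- n)) = n * (1 - n)) /\
  (forall (f h : R -> R),
     smooth_on (fun z => 0 < z) f -> smooth_on (fun z => 0 < z) h ->
     forall g ginv : metric, is_frame_metric n eps f h g ginv ->
     forall c : R, 0 < c -> 8 * c ^ 2 * (1 + eps * Rpower c (- n)) = n * (1 - n) ->
     forall b : R,
       legendre n eps f h g (gamma_bc b c) /\
       proper_biharmonic g ginv (gamma_bc b c)).
Proof.
  intros Hn Heps. split.
  - destruct (exists_biharm_defect_root n eps Hn Heps) as [c [Hc Hdef]].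
    exists c. split; [exact Hc |]. unfold biharm_defect, lam in Hdef. lra.
  - intros f h Hf Hh g ginv Hg c Hc Hceq b.
    pose proof (smooth_on_ex_derive _ f Hf) as Hf'.
    pose proof (smooth_on_ex_derive _ h Hh) as Hh'.
    assert (Hdef : biharm_defect n eps c = 0) by (unfold biharm_defect, lam; lra).
    split; [exact (legendre_gamma_bc n eps f h g ginv Hg b c Hc) |].
    split.
    + intros s l Hl.
      rewrite (bitension_gamma_bc n eps f h g ginv Hf' Hh' Hg b c Hc Heps s l Hl), Hdef.
      ring.
    + apply (gamma_bc_not_geodesic n eps f h g ginv Hf' Hh' Hg b c Hc). lra.
Qed.
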